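(* Let $\pi:\mathbf H_o\to\mathbf{WQSym}$ be the projection $\mathcal F\mapsto\pi(S'^{\mathcal F})$ induced by $a_{ij}\mapsto x_j$ on the second realization, and $\iota:\mathbf H_{NCK}\to\mathbf H_o$ the embedding by canonical (preorder) labelling. Then $\pi\circ\iota$ is injective; i.e., the elements $\pi(S'^{\iota(\overline{\mathcal F})})=\sum_u\mathbf M_u$ (sum over packed words $u$ with $u_k<u_l$ whenever $k$ is the parent of $l$ in $\iota(\overline{\mathcal F})$), for $\overline{\mathcal F}$ ranging over plane forests, are linearly independent in $\mathbf{WQSym}$.
   Context: A plane forest is a finite sequence of plane trees (rooted trees whose children are linearly ordered); $\mathbf H_{NCK}$ is the vector space (noncommutative Connes–Kreimer Hopf algebra) with basis the plane forests. For a plane forest $\overline{\mathcal F}$ with $n$ vertices, $\iota(\overline{\mathcal F})$ is the rooted forest on vertex set $[n]$ obtained by numbering the vertices in order of first visit in a left depth-first traversal of the trees from left to right. $\mathbf H_o$ is the Hopf algebra with basis ordered forests (rooted forests on vertex set $[n]$, labels arbitrary). Second realization: over $A'=\{a_{ij}:1\le i\le j\}$ with $a_{hi}\prec a_{ij}$ for $h\le i<j$, $S'^{\mathcal F}$ is the sum of words $w_1\cdots w_n$ with $w_k$ a diagonal letter $a_{ii}$ for each root $k$ and $w_k\prec w_l$ whenever $k$ is the parent of $l$. $\pi$ is the algebra morphism $a_{ij}\mapsto x_j$ into series over $X=\{x_1<x_2<\cdots\}$. A word over positive integers is packed if its set of letters is $\{1,\dots,m\}$; $\mathrm{pack}(w)$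 replaces the $r$-th smallest letter by $r$; $\mathbf M_u=\sum_{\mathrm{pack}(w)=u}w$, and $\mathbf{WQSym}$ is the span of the $\mathbf M_u$. *)

From mathcomp Require Import all_boot all_order all_algebra.
Set Implicit Arguments. Unset Strict Implicit. Unset Printing Implicit Defensive.
Import GRing.Theory.

Inductive ptree : Type := PNode of seq ptree.
Definition pforest := seq ptree.

Fixpoint tsize (t : ptree) : nat :=
  let: PNode ch := t in (foldr (fun t' n => tsize t' + n) 0 ch).+1.
Definition fsize (f : pforest) : nat := foldr (fun t n => tsize t + n) 0 f.

(* The canonical labelling iota: vertices are numbered (0-based here, i.e.
   label k+1 of the paper is position k) in order of first visit of a left
   depth-first traversal of the trees from left to right.  [tpar t p o]
   lists, in that order, the parent of each vertex of t (None for a root),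
   where t's root receives number o and has parent p. *)
Fixpoint tpar (t : ptree) (p : option nat) (o : nat) : seq (option nat) :=
  let: PNode ch := t in
  p :: (fix fpar (ts : seq ptree) (o' : nat) : seq (option nat) :=
          match ts with
          | [::] => [::]
          | t' :: ts' => let s := tpar t' (Some o) o' in s ++ fpar ts' (o' + size s)
          end) ch o.+1.

Fixpoint fpar_from (f : pforest) (o : nat) : seq (option nat) :=
  match f with
  | [::] => [::]
  | t :: f' => let s := tpar t None o in s ++ fpar_from f' (o + size s)
  end.

Definition iota_par (f : pforest) : seq (option nat) := fpar_from f 0.

Definition pack (w : seq nat) : seq nat :=
  [seq (size (undup [seq y <- w | y < x])).+1 | x <- w].

Definition is_packed (u : seq nat) : bool :=
  all (fun k => k \in u) (iota 1 (foldr maxn 0 u)) && all (fun k => 0 < k) u.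

Definition incr_on (f : pforest) (u : seq nat) : bool :=
  [forall k : 'I_(size (iota_par f)),
     if nth None (iota_par f) k is Some p then nth 0 u p < nth 0 u k else true].

(* Coefficient of the word w (over X = {x_1 < x_2 < ...}, x_i identified
   with i > 0) in  pi(S'^{iota(f)}) = sum_u M_u, the sum ranging over packed
   words u of length n = |f| with u_p < u_k whenever p is the parent of k,
   and M_u = sum_{pack w = u} w.  Since pack w is packed for every nonempty
   positive word, the coefficient of w is the indicator below. *)
Definition piota (K : fieldType) (f : pforest) (w : seq nat) : K :=
  if [&& all (fun k => 0 < k) w, size w == fsize f,
         is_packed (pack w) & incr_on f (pack w)] then 1%R else 0%R.

(* The depth word of a plane forest f lists one plus the depth of each vertex,
   in canonical order.  It is packed and increases along every edge of
   iota(f), so it occurs with coefficient 1 in pi(S'^{iota(f)}).  If it also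
   occurs in pi(S'^{iota(g)}), its letters strictly increase along every chain
   of ancestors of g, so each vertex of g is at most as deep as the vertex of f
   with the same label.  Take f of minimal total depth among the forests with
   a nonzero coefficient: any other such g with a nonzero term at the depth
   word of f has the same depth sequence as f, hence equals f, because a plane
   forest is determined by its depths in preorder. *)

From mathcomp Require Import all_boot all_order all_algebra zify.
Import GRing.Theory.

Lemma foldr_maxn_ub w x : x \in w -> x <= foldr maxn 0 w.
Proof.
elim: w => //= a w IH; rewrite in_cons leq_max => /orP[/eqP->|/IH->];
  by rewrite ?leqnn ?orbT.
Qed.

Lemma foldr_maxn_mem w : 0 < foldr maxn 0 w -> foldr maxn 0 w \in w.
Proof.
elim: w => //= a w IH; rewrite in_cons.
by case: (leqP (foldr maxn 0 w) a) => [_|_ /IH->]; rewrite ?eqxx ?orbT.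
Qed.

Lemma down_closed_packed w : all (fun k => 0 < k) w ->
  {in w, forall x, 1 < x -> x.-1 \in w} -> is_packed w.
Proof.
move=> w_pos w_down; rewrite /is_packed w_pos andbT.
apply/allP => k; rewrite mem_iota add1n ltnS => /andP[k_gt0 k_le].
suff below n : k + n \in w -> k \in w.
  by apply: (below (foldr maxn 0 w - k)); rewrite subnKC ?foldr_maxn_mem //; lia.
elim: n => [|n IH]; first by rewrite addn0.
by move=> /w_down; rewrite addnS /= => /(_ _)/IH; apply; lia.
Qed.

Lemma pack_packed w : is_packed w -> pack w = w.
Proof.
case/andP=> /allP w_full /allP w_pos.
rewrite /pack -[RHS]map_id; apply/eq_in_map => x x_in /=.
have x_gt0 := w_pos x x_in.
suff /perm_size-> : perm_eq (undup [seq y <- w | y < x]) (iota 1 x.-1).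
  by rewrite size_iota prednK.
apply: uniq_perm; rewrite ?undup_uniq ?iota_uniq // => y.
rewrite mem_undup mem_filter mem_iota add1n prednK //.
apply/andP/andP=> [[y_lt /w_pos]|[y_gt0 y_lt]]; first by split.
split=> //; apply: w_full; rewrite mem_iota add1n ltnS y_gt0.
by apply: leq_trans (ltnW y_lt) _; apply: foldr_maxn_ub.
Qed.

Lemma sumn_nth s : sumn s = \sum_(i < size s) nth 0 s i.
Proof. by rewrite sumnE (big_nth 0) big_mkord. Qed.

Lemma eq_of_leq_nth_sumn s t : size s = size t ->
  (forall k, nth 0 s k <= nth 0 t k) -> sumn t <= sumn s -> s = t.
Proof.
move=> size_st le_st; rewrite !sumn_nth -size_st.
have le_sum := leqif_sum (P := xpredT) (fun (i : 'I_(size s)) _ => leqif_eq (le_st i)).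
rewrite (geq_leqif le_sum) => /forallP eq_st.
by apply: (eq_from_nth size_st) => k k_lt; apply/eqP/(eq_st (Ordinal k_lt)).
Qed.

Fixpoint tdepths (t : ptree) (d : nat) : seq nat :=
  let: PNode ts := t in d :: flatten [seq tdepths t' d.+1 | t' <- ts].

Definition fdepths (f : pforest) (d : nat) : seq nat :=
  flatten [seq tdepths t d | t <- f].

Lemma tdepthsE ts d : tdepths (PNode ts) d = d :: fdepths ts d.+1.
Proof. by []. Qed.

Definition ptree_forest_rect (P : ptree -> Type) (Q : pforest -> Type)
    (Qnil : Q [::]) (Qcons : forall t ts, P t -> Q ts -> Q (t :: ts))
    (Pnode : forall ts, Q ts -> P (PNode ts)) : forall t, P t :=
  fix tree t := let: PNode ts := t in Pnode ts
    ((fix forest ts : Q ts :=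
        if ts is t :: ts' then Qcons t ts' (tree t) (forest ts') else Qnil) ts).

Lemma size_tdepths t d : size (tdepths t d) = tsize t.
Proof.
move: t d; apply: (ptree_forest_rect (fun t => forall d, size (tdepths t d) = tsize t)
   (fun ts => forall d, size (fdepths ts d) = fsize ts)) => [//||ts IH d].
- by move=> t ts IHt IHts d; rewrite /fdepths /= size_cat IHt -/(fdepths ts d) IHts.
- by rewrite tdepthsE /= IH.
Qed.

Lemma size_fdepths f d : size (fdepths f d) = fsize f.
Proof.
by elim: f => // t f IHf; rewrite /fdepths /= size_cat size_tdepths -/(fdepths f d) IHf.
Qed.

Lemma tdepths_ge t d : all (leq d) (tdepths t d).
Proof.
move: t d; apply: (ptree_forest_rect (fun t => forall d, all (leq d) (tdepths t d))
   (fun ts => forall d, all (leq d) (fdepths ts d))) => [//||ts IH d].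
- by move=> t ts IHt IHts d; rewrite /fdepths /= all_cat IHt -/(fdepths ts d) IHts.
- by rewrite tdepthsE /= leqnn; apply: sub_all (IH d.+1) => x; apply: ltnW.
Qed.

Lemma fdepths_ge f d : all (leq d) (fdepths f d).
Proof. by elim: f => // t f IHf; rewrite /fdepths /= all_cat tdepths_ge. Qed.

Lemma fdepths_cons ts f d :
  fdepths (PNode ts :: f) d = d :: fdepths ts d.+1 ++ fdepths f d.
Proof. by []. Qed.

Lemma find_fdepths_children ts f d :
  find (fun x => x <= d) (fdepths ts d.+1 ++ fdepths f d) = size (fdepths ts d.+1).
Proof.
rewrite find_cat ifN; last first.
  by apply/hasPn => x /(allP (fdepths_ge ts d.+1)); rewrite -ltnNge.
by case: f => [|[ts'] f]; rewrite ?fdepths_cons /= ?leqnn addn0.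
Qed.

Lemma fdepths_inj d : injective (fdepths^~ d).
Proof.
move=> f g; have [n] := ubnP (size (fdepths f d)); elim: n => // n IH in f g d *.
case: f g => [|[ts] f] [|[ts'] g]; rewrite ?fdepths_cons //= ltnS size_cat.
move=> size_lt [eq_depths].
have cut := esym (find_fdepths_children ts f d).
have eq_ts : fdepths ts d.+1 = fdepths ts' d.+1.
  rewrite -[LHS](take_size_cat (fdepths f d) cut) eq_depths.
  by rewrite find_fdepths_children take_size_cat.
have eq_f : fdepths f d = fdepths g d.
  rewrite -[LHS](drop_size_cat (fdepths f d) cut) eq_depths.
  by rewrite find_fdepths_children drop_size_cat.
by congr (PNode _ :: _); [apply: IH eq_ts | apply: IH eq_f]; lia.
Qed.

Fixpoint children_par (o : nat) (ts : seq ptree) (o' : nat) : seq (option nat) :=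
  if ts is t :: ts' then
    let s := tpar t (Some o) o' in s ++ children_par o ts' (o' + size s)
  else [::].

Lemma tparE ts p o : tpar (PNode ts) p o = p :: children_par o ts o.+1.
Proof. by rewrite /=; congr (_ :: _); elim: ts o.+1 => //= t ts IH o'; rewrite IH. Qed.

(* [parents_fit ext o par dep]: [par] and [dep] list the parents and depths
   of the vertices numbered o, o+1, ...; a parent q >= o lies in the block,
   before its child and one level higher, while any other parent satisfies
   [ext] together with the depth of its child. *)
Definition parents_fit (ext : option nat -> nat -> bool) (o : nat)
    (par : seq (option nat)) (dep : seq nat) : Prop :=
  size par = size dep /\
  forall i, i < size par ->
    match nth None par i with
    | Some q => if o <= q then q < o + i /\ (nth 0 dep (q - o)).+1 = nth 0 dep i
                else ext (Some q) (nth 0 dep i)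
    | None => ext None (nth 0 dep i)
    end.

Lemma parents_fit_cat (ext : option nat -> nat -> bool) o s1 d1 s2 d2 :
    (forall q x, ext (Some q) x -> q < o) ->
    parents_fit ext o s1 d1 -> parents_fit ext (o + size s1) s2 d2 ->
  parents_fit ext o (s1 ++ s2) (d1 ++ d2).
Proof.
move=> ext_lt [size1 fit1] [size2 fit2].
split=> [|i]; first by rewrite !size_cat size1 size2.
rewrite size_cat !nth_cat -size1; case: (ltnP i (size s1)) => [i_lt _|i_ge i_lt].
  have := fit1 i i_lt; case: (nth None s1 i) => // q.
  by case: ifP => // _ [q_lt <-]; rewrite nth_cat -size1 ifT //; lia.
have := fit2 (i - size s1) ltac:(lia).
case: (nth None s2 _) => // q.
case: ifP => [q_ge [q_lt <-]|_ /[dup] /ext_lt q_lt ext_q]; last by rewrite ifF //; lia.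
rewrite ifT; last lia.
by rewrite nth_cat -size1 ifF ?subnDA; [split=> //; lia|lia].
Qed.

Lemma tpar_fit t p o d : (if p is Some q then q < o else true) ->
  parents_fit (fun p' x => (p' == p) && (x == d)) o (tpar t p o) (tdepths t d).
Proof.
move: t p o d; apply: (ptree_forest_rect
  (fun t => forall p o d, (if p is Some q then q < o else true) ->
     parents_fit (fun p' x => (p' == p) && (x == d)) o (tpar t p o) (tdepths t d))
  (fun ts => forall o o' d, o < o' ->
     parents_fit (fun p' x => (p' == Some o) && (x == d.+1)) o'
                 (children_par o ts o') (fdepths ts d.+1))).
- by move=> o o' d _; split=> // i.
- move=> t ts IHt IHts o o' d o_lt.
  apply: parents_fit_cat; first by move=> q x /andP[/eqP[->] _].
    exact: IHt.
  by apply: IHts; lia.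
- move=> ts IHts p o d p_lt; rewrite tparE tdepthsE.
  have [size_ch fit_ch] := IHts o o.+1 d (ltnSn o).
  split=> [|[|i]] /=; first by rewrite size_ch.
    by case: p p_lt => [q q_lt|_]; rewrite ?ifF ?eqxx //; lia.
  move=> /fit_ch; case: (nth None _ i) => [q|/andP[]//].
  case: ifP => [q_ge [q_lt <-]|_ /andP[/eqP[->] /eqP->]].
    by rewrite ifT; [split; [lia|rewrite (_ : q - o = (q - o.+1).+1) //; lia]|lia].
  by rewrite leqnn subnn; split=> //; lia.
Qed.

Lemma fpar_from_fit f o :
  parents_fit (fun p x => (p == None) && (x == 0)) o (fpar_from f o) (fdepths f 0).
Proof.
elim: f o => [|t f IHf] o; first by split=> // i.
by apply: parents_fit_cat => //; exact: tpar_fit.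
Qed.

Definition depths (f : pforest) : seq nat := fdepths f 0.

Lemma size_iota_par f : size (iota_par f) = size (depths f).
Proof. by case: (fpar_from_fit f 0). Qed.

Lemma depth_parent f k : k < size (depths f) ->
  if nth None (iota_par f) k is Some q then
    q < k /\ (nth 0 (depths f) q).+1 = nth 0 (depths f) k
  else nth 0 (depths f) k = 0.
Proof.
have [size_par fit] := fpar_from_fit f 0.
rewrite -size_par => /fit; case: (nth None _ k) => [q|/andP[_ /eqP//]].
by rewrite leq0n subn0.
Qed.

Definition depth_word (f : pforest) : seq nat := map S (depths f).

Lemma depth_word_pos f : all (fun k => 0 < k) (depth_word f).
Proof. by apply/allP=> _ /mapP[x _ ->]. Qed.

Lemma depth_word_packed f : is_packed (depth_word f).
Proof.
apply: down_closed_packed; first exact: depth_word_pos.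
move=> _ /mapP[_ /(nthP 0)[k k_lt <-] ->]; rewrite ltnS => depth_gt0.
have := depth_parent f k k_lt; case: (nth None _ k) => [q [q_lt <-]|depth0].
  by apply/map_f/mem_nth; exact: ltn_trans k_lt.
by rewrite depth0 in depth_gt0.
Qed.

Lemma incr_on_depth_word f : incr_on f (depth_word f).
Proof.
apply/forallP=> -[k /=]; rewrite size_iota_par => k_lt.
have := depth_parent f k k_lt; case: (nth None _ k) => // q [q_lt q_parent].
by rewrite /depth_word !(nth_map 0) ?ltnS -?q_parent // (ltn_trans q_lt).
Qed.

Lemma piota_depth_word (K : fieldType) f : piota K f (depth_word f) = 1%R.
Proof.
rewrite /piota pack_packed ?depth_word_packed // incr_on_depth_word.
by rewrite depth_word_pos /depth_word size_map size_fdepths eqxx.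
Qed.

Lemma depths_le_of_incr f g : size (depths g) = size (depths f) ->
  incr_on g (depth_word f) -> forall k, nth 0 (depths g) k <= nth 0 (depths f) k.
Proof.
move=> size_gf /forallP incr k; elim/ltn_ind: k => k IH.
have [k_lt|k_ge] := ltnP k (size (depths g)); last by rewrite nth_default.
have := depth_parent g k k_lt.
have k_lt' : k < size (iota_par g) by rewrite size_iota_par.
have := incr (Ordinal k_lt'); rewrite /=.
case: (nth None _ k) => [q|_ ->//]; rewrite size_gf in k_lt.
move=> + [q_lt <-]; have q_lt' := ltn_trans q_lt k_lt.
by rewrite /depth_word !(nth_map 0) // ltnS; apply: leq_ltn_trans (IH q q_lt).
Qed.

Lemma piota_depth_word_eq (K : fieldType) f g :
  piota K g (depth_word f) != 0%R -> sumn (depths f) <= sumn (depths g) -> g = f.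
Proof.
rewrite /piota; case: ifP => [/and4P[_ size_w _ incr] _ sum_le|]; last by rewrite eqxx.
rewrite pack_packed ?depth_word_packed // in incr.
have size_gf : size (depths g) = size (depths f).
  by move/eqP: size_w; rewrite /depth_word size_map /depths !size_fdepths.
apply: (fdepths_inj 0).
exact: eq_of_leq_nth_sumn size_gf (depths_le_of_incr f g size_gf incr) sum_le.
Qed.

(* Neither the characteristic of K nor [size c = size fs] matters: the
   coefficient matrix is unitriangular. *)
Theorem mainTheorem6 (K : fieldType) (hK : [pchar K]%R =i pred0)
  (fs : seq pforest) (c : seq K)
  (hc : size c = size fs)
  (hdist : forall i j, (i < j)%N -> (j < size fs)%N -> nth [::] fs i <> nth [::] fs j)
  (h0 : forall w : seq nat,
      (\sum_(i < size fs) (c`_i * piota K (nth [::] fs i) w))%R = 0%R) :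
  forall i, (i < size fs)%N -> nth 0%R c i = 0%R.
Proof.
move=> i i_lt; apply/eqP/negPn/negP => c_i.
pose nonzero (j : 'I_(size fs)) := (c`_j != 0)%R.
pose weight (j : 'I_(size fs)) := sumn (depths (nth [::] fs j)).
have [j c_j weight_min] := @arg_minnP _ (Ordinal i_lt) nonzero weight c_i.
move: (h0 (depth_word (nth [::] fs j))) c_j.
rewrite (bigD1 j) //= piota_depth_word mulr1 big1 ?addr0 => [c_j0|k k_neq_j].
  by rewrite /nonzero c_j0 eqxx.
have [->|c_k] := eqVneq (c`_k)%R 0%R; first by rewrite mul0r.
have [->|piota_k] := eqVneq (piota K (nth [::] fs k) (depth_word (nth [::] fs j))) 0%R.
  by rewrite mulr0.
have eq_kj := piota_depth_word_eq _ _ _ piota_k (weight_min k c_k).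
case: (ltngtP k j) => [k_lt|j_lt|/val_inj eq_k]; last by rewrite eq_k eqxx in k_neq_j.
  by case: (hdist _ _ k_lt (ltn_ord j) eq_kj).
by case: (hdist _ _ j_lt (ltn_ord k) (esym eq_kj)).
Qed.
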